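(* For a positive integer $X$, let $N_X$ denote the number of distinct orbits $o(\mathbf{x})$, $\mathbf{x}\in\mathbb{Z}^2$, with $\operatorname{length}(o(\mathbf{x}))=X$. Then $N_X=0$ if $4\nmid X$, and $$N_X=\Big\lfloor\frac X6\Big\rfloor-\Big\lceil\frac X{12}\Big\rceil+1\quad\text{if } 4\mid X.$$
   Context: Define $\mathcal K_1(x_1,x_2)=(-x_1+x_2,x_2)$ and $\mathcal K_2(x_1,x_2)=(x_1,x_1-x_2)$ on $\mathbb{Z}^2$. The orbit $o(\mathbf{x})$ is the set of points obtained from $\mathbf{x}$ by repeated application of $\mathcal K_1,\mathcal K_2$: $(x_1,x_2)$, $(-x_1+x_2,x_2)$, $(-x_1+x_2,-x_1)$, $(-x_2,-x_1)$, $(-x_2,x_1-x_2)$, $(x_1,x_1-x_2)$. Orbits partition $\mathbb{Z}^2$. The length of the orbit is the Euclidean length of the closed path through the six points in the listed order: $$\operatorname{length}(o(\mathbf{x}))=2\big(|2x_1-x_2|+|x_1+x_2|+|2x_2-x_1|\big).$$ *)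

From Stdlib Require Import ZArith List.
Open Scope Z_scope.

Definition K1 (p : Z * Z) : Z * Z := (- fst p + snd p, snd p).
Definition K2 (p : Z * Z) : Z * Z := (fst p, fst p - snd p).

Inductive in_orbit (x : Z * Z) : Z * Z -> Prop :=
| orb_refl : in_orbit x x
| orb_K1 y : in_orbit x y -> in_orbit x (K1 y)
| orb_K2 y : in_orbit x y -> in_orbit x (K2 y).

Definition orbit (x : Z * Z) : Z * Z -> Prop := in_orbit x.

Definition same_orbit (a b : Z * Z) : Prop :=
  forall y, orbit a y <-> orbit b y.

Definition orbit_length (x : Z * Z) : Z :=
  2 * (Z.abs (2 * fst x - snd x) + Z.abs (fst x + snd x) + Z.abs (2 * snd x - fst x)).

Definition num_orbits (X : Z) (n : nat) : Prop :=
  exists s : list (Z * Z),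
    length s = n /\ NoDup s /\
    (forall a, In a s -> orbit_length a = X) /\
    (forall a b, In a s -> In b s -> same_orbit a b -> a = b) /\
    (forall x, orbit_length x = X -> exists a, In a s /\ same_orbit x a).

(** Writing [u = 2 x1 - x2] and [w = 2 x2 - x1] (so [x1 + x2 = u + w]), the
    length is [2 (|u| + |w| + |u + w|) = 4 M] with [M = max (|u|, |w|, |u + w|)],
    hence always divisible by 4.  The orbit of [x] is the hexagon of six points
    obtained by alternately applying [K1] and [K2]; in the [(u, w)] coordinates
    these points sit one on each side of the hexagon [max (|u|, |w|, |u + w|) = M],
    so every orbit of length [4 M] meets the segment [u = -M, 0 <= w <= M]
    exactly once.  Counting the lattice points on that segment, i.e. the integers
    [x1] with [-2M <= 3 x1 <= -M], gives [floor (2M/3) - ceil (M/3) + 1]. *)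
From Stdlib Require Import ZArith List Lia FinFun.
Import ListNotations.
Open Scope Z_scope.

Lemma K1_involutive p : K1 (K1 p) = p.
Proof. destruct p; unfold K1; simpl; f_equal; lia. Qed.

Lemma K2_involutive p : K2 (K2 p) = p.
Proof. destruct p; unfold K2; simpl; f_equal; lia. Qed.

Lemma in_orbit_trans x y z : in_orbit x y -> in_orbit y z -> in_orbit x z.
Proof. intros Hxy Hyz; induction Hyz; [exact Hxy | apply orb_K1 | apply orb_K2]; auto. Qed.

Lemma in_orbit_sym x y : in_orbit x y -> in_orbit y x.
Proof.
  induction 1 as [| y _ IH | y _ IH]; [constructor | |];
    apply (in_orbit_trans _ y); auto.
  - rewrite <- (K1_involutive y) at 2; repeat constructor.
  - rewrite <- (K2_involutive y) at 2; repeat constructor.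
Qed.

Lemma same_orbit_of_in_orbit x a : in_orbit x a -> same_orbit x a.
Proof.
  intros Hxa y; split; intro H.
  - exact (in_orbit_trans _ _ _ (in_orbit_sym _ _ Hxa) H).
  - exact (in_orbit_trans _ _ _ Hxa H).
Qed.

Definition hexagon (x : Z * Z) : list (Z * Z) :=
  [x; K1 x; K2 (K1 x); K1 (K2 (K1 x)); K2 (K1 (K2 (K1 x)));
   K1 (K2 (K1 (K2 (K1 x))))].

Lemma in_orbit_hexagon x y : in_orbit x y <-> In y (hexagon x).
Proof.
  split.
  - induction 1 as [| y _ IH | y _ IH]; [now left | |];
      destruct x; destruct IH as [<-|[<-|[<-|[<-|[<-|[<-|[]]]]]]];
      unfold hexagon, K1, K2; cbn; repeat first [left; f_equal; lia | right].
  - intros [<-|[<-|[<-|[<-|[<-|[<-|[]]]]]]]; repeat constructor.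
Qed.

Lemma orbit_length_divisible_by_4 x : (4 | orbit_length x).
Proof.
  destruct x as [x1 x2]; unfold orbit_length; cbn [fst snd].
  set (u := 2 * x1 - x2); set (w := 2 * x2 - x1).
  replace (x1 + x2) with (u + w) by (unfold u, w; lia). clearbody u w.
  destruct (Z.le_ge_cases 0 u), (Z.le_ge_cases 0 w), (Z.le_ge_cases 0 (u + w));
    first [ exists (Z.abs u); lia | exists (Z.abs w); lia | exists (Z.abs (u + w)); lia ].
Qed.

(* The segment [u = -M, 0 <= w <= M] in the coordinates of the header. *)
Definition fundamental (M : Z) (q : Z * Z) : Prop :=
  snd q = 2 * fst q + M /\ -2 * M <= 3 * fst q /\ 3 * fst q <= -M.

Lemma orbit_length_fundamental M q : fundamental M q -> orbit_length q = 4 * M.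
Proof. destruct q; unfold fundamental, orbit_length; cbn [fst snd]; lia. Qed.

Lemma hexagon_meets_fundamental M x :
  orbit_length x = 4 * M -> exists q, In q (hexagon x) /\ fundamental M q.
Proof.
  intros Hlen; apply Exists_exists.
  destruct x as [x1 x2]; unfold orbit_length in Hlen; cbn [fst snd] in Hlen.
  (* the sign pattern of [(u, w, u + w)] decides which side of the hexagon is [u = -M] *)
  destruct (Z.le_ge_cases 0 (2 * x1 - x2)), (Z.le_ge_cases 0 (2 * x2 - x1)),
    (Z.le_ge_cases 0 (x1 + x2));
    unfold hexagon; repeat first
      [ apply Exists_cons_hd; unfold fundamental, K1, K2; cbn [fst snd]; lia
      | apply Exists_cons_tl ].
Qed.

Lemma fundamental_unique_in_hexagon M a b :
  fundamental M a -> fundamental M b -> In b (hexagon a) -> a = b.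
Proof.
  destruct a as [a1 a2], b as [b1 b2]; unfold fundamental, hexagon, K1, K2; cbn [fst snd In].
  intros Ha Hb Hin.
  destruct Hin as [E|[E|[E|[E|[E|[E|[]]]]]]]; injection E; intros; f_equal; lia.
Qed.

Definition zrange (lo hi : Z) : list Z :=
  map (fun i => lo + Z.of_nat i) (seq 0 (Z.to_nat (hi - lo + 1))).

Lemma in_zrange lo hi c : In c (zrange lo hi) <-> lo <= c <= hi.
Proof.
  unfold zrange; rewrite in_map_iff; split.
  - intros [i [<- Hi]]; apply in_seq in Hi; lia.
  - intros Hc; exists (Z.to_nat (c - lo)); rewrite in_seq; lia.
Qed.

Lemma zrange_NoDup lo hi : NoDup (zrange lo hi).
Proof.
  apply Injective_map_NoDup; [intros i j; lia | apply seq_NoDup].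
Qed.

Lemma length_zrange lo hi : length (zrange lo hi) = Z.to_nat (hi - lo + 1).
Proof. unfold zrange; now rewrite length_map, length_seq. Qed.

Definition fundamental_points (M : Z) : list (Z * Z) :=
  map (fun c => (c, 2 * c + M)) (zrange (- (2 * M / 3)) (- ((M + 2) / 3))).

Lemma in_fundamental_points M q : In q (fundamental_points M) <-> fundamental M q.
Proof.
  unfold fundamental_points, fundamental; rewrite in_map_iff.
  pose proof (Z.div_mod (2 * M) 3 ltac:(lia)); pose proof (Z.mod_pos_bound (2 * M) 3 ltac:(lia)).
  pose proof (Z.div_mod (M + 2) 3 ltac:(lia)); pose proof (Z.mod_pos_bound (M + 2) 3 ltac:(lia)).
  split.
  - intros [c [<- Hc]]; apply in_zrange in Hc; cbn [fst snd]; lia.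
  - destruct q as [c d]; cbn [fst snd]; intros (-> & Hc); exists c; rewrite in_zrange; split; [easy | lia].
Qed.

Lemma num_orbits_not_divisible_by_4 X : ~ (4 | X) -> num_orbits X 0.
Proof.
  intros H4; exists nil; repeat split; try constructor; try (cbn; tauto).
  intros x Hx; exfalso; apply H4; rewrite <- Hx; apply orbit_length_divisible_by_4.
Qed.

Lemma num_orbits_4M M :
  num_orbits (4 * M) (Z.to_nat (2 * M / 3 - (M + 2) / 3 + 1)).
Proof.
  exists (fundamental_points M); repeat split.
  - unfold fundamental_points; rewrite length_map, length_zrange; f_equal; lia.
  - apply Injective_map_NoDup; [intros c c' E; now injection E | apply zrange_NoDup].
  - intros a Ha; apply in_fundamental_points in Ha; now apply orbit_length_fundamental.
  - intros a b Ha Hb Hab; apply in_fundamental_points in Ha, Hb.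
    apply (fundamental_unique_in_hexagon M); auto.
    apply in_orbit_hexagon, Hab; constructor.
  - intros x Hx; destruct (hexagon_meets_fundamental M x Hx) as [q [Hq Hfq]].
    exists q; split; [now apply in_fundamental_points |].
    now apply same_orbit_of_in_orbit, in_orbit_hexagon.
Qed.

Lemma floor_ceil_4M M :
  4 * M / 6 - (4 * M + 11) / 12 + 1 = 2 * M / 3 - (M + 2) / 3 + 1.
Proof.
  pose proof (Z.div_mod (2 * M) 3 ltac:(lia)); pose proof (Z.mod_pos_bound (2 * M) 3 ltac:(lia)).
  pose proof (Z.div_mod (M + 2) 3 ltac:(lia)); pose proof (Z.mod_pos_bound (M + 2) 3 ltac:(lia)).
  pose proof (Z.div_mod (4 * M) 6 ltac:(lia)); pose proof (Z.mod_pos_bound (4 * M) 6 ltac:(lia)).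
  pose proof (Z.div_mod (4 * M + 11) 12 ltac:(lia));
    pose proof (Z.mod_pos_bound (4 * M + 11) 12 ltac:(lia)).
  lia.
Qed.

Theorem mainTheorem16 (X : Z) (hX : 0 < X) :
  (~ (4 | X) -> num_orbits X 0%nat) /\
  ((4 | X) -> num_orbits X (Z.to_nat (X / 6 - (X + 11) / 12 + 1))).
Proof.
  split; [apply num_orbits_not_divisible_by_4 |].
  intros [M ->]; rewrite Z.mul_comm, floor_ceil_4M.
  apply num_orbits_4M.
Qed.
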